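(* Let $\psi(\theta;y,x)\in\mathbb R^q$, $\theta\in\Theta\subseteq\mathbb R^q$, and let $\theta(\cdot)$ be the EE functional defined by $E_P[\psi(\theta(P);Y,X)]=0$. Suppose $\mathcal P$ is a class of joint distributions of $(Y,X)$ such that for every $P\in\mathcal P$, with $\hat\theta_N=\theta(\hat P_N)$ the plug-in estimate from $N$ iid draws, $N^{1/2}(\hat\theta_N-\theta(P))\to\mathcal N\big(0,\Lambda_P^{-1}\,V_P[\psi(\theta(P);Y,X)]\,(\Lambda_P^{-1})^{T}\big)$ in distribution, where $\Lambda_P=\nabla_\theta E_P[\psi(\theta;Y,X)]\big|_{\theta=\theta(P)}$ is invertible and $V_P$ denotes the covariance matrix under $P$. Let a fixed dataset of size $N$ have empirical distribution $\hat P_N\in\mathcal P$, and let $\theta^*_M=\theta(P^*_M)$ where $P^*_M$ is the empirical distribution of $M$ iid draws from $\hat P_N$. Then, with $N$ and the data fixed, $M^{1/2}(\theta^*_M-\theta(\hat P_N))$ converges in distribution as $M\to\infty$ to a normal distribution with mean $0$ whose covariance equals the plug-in sandwich estimator $\Lambda_{\hat P_N}^{-1}\,V_{\hat P_N}[\psi(\hat\theta_N;Y,X)]\,(\Lambda_{\hat P_N}^{-1})^{T}$, $\hat\theta_N=\theta(\hat P_N)$.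
   Context: An estimating-equation (EE) functional assigns to a joint distribution $P$ of $(Y,X)$ the solution $\theta(P)$ of $E_P[\psi(\theta;Y,X)]=0$, assumed unique. The $M$-of-$N$ bootstrap resamples $M$ cases iid from the empirical distribution of the $N$ observed cases $(y_i,x_i)$. *)

From HB Require Import structures.
From mathcomp Require Import all_boot all_order all_algebra.
From mathcomp Require Import all_classical all_reals all_analysis.

Set Implicit Arguments.
Unset Strict Implicit.
Unset Printing Implicit Defensive.

Import Order.TTheory GRing.Theory Num.Theory.
Import numFieldNormedType.Exports.
Local Open Scope classical_set_scope.
Local Open Scope ring_scope.

Section EE.
Variables (R : realType) (d : measure_display) (Z : measurableType d) (q : nat).

(* psi(theta; z) in R^q, with z = (y,x); vectors of R^q are row vectors 'rV_q *)
Implicit Types (psi : 'rV[R]_q -> Z -> 'rV[R]_q) (P : {measure set Z -> \bar R}).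

Definition EEmean psi P (t : 'rV[R]_q) : 'rV[R]_q :=
  \row_i Rintegral P setT (fun z => psi t z 0 i).

Definition EE_sol psi (Theta : set 'rV[R]_q) P (t : 'rV[R]_q) : Prop :=
  Theta t /\
  (forall i, P.-integrable setT (fun z => (psi t z 0 i)%:E)) /\
  EEmean psi P t = 0.

(** The EE functional theta(P): the (assumed unique) solution of the EE *)
Definition theta_EE psi Theta P : 'rV[R]_q := xget 0 (EE_sol psi Theta P).

(** Lambda_P = grad_theta E_P[psi(theta;Z)] at theta = theta(P);
    entry (i,j) = d/d theta_j E_P[psi_i].  ('J f p is the matrix of
    the differential acting on row vectors, i.e. the transpose.) *)
Definition Lambda psi Theta P : 'M[R]_q :=
  ('J (EEmean psi P) (theta_EE psi Theta P))^T.

Definition Vcov psi P (t : 'rV[R]_q) : 'M[R]_q :=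
  \matrix_(i, j) Rintegral P setT
     (fun z => (psi t z 0 i - EEmean psi P t 0 i) *
               (psi t z 0 j - EEmean psi P t 0 j)).

Definition sandwich psi Theta P : 'M[R]_q :=
  invmx (Lambda psi Theta P) *m Vcov psi P (theta_EE psi Theta P)
    *m (invmx (Lambda psi Theta P))^T.

End EE.

Section Emp.
Variables (R : realType) (d : measure_display) (Z : measurableType d).

(** empirical distribution of the first n observations zs 0, ..., zs (n-1):
    (1/n) sum_{k<n} dirac (zs k)   (the zero measure when n = 0) *)
Definition empirical (n : nat) (zs : nat -> Z) : {measure set Z -> \bar R} :=
  mscale ((n%:R : R)^-1)%:nng (msum (fun k => \d_(zs k)) n).

Definition iid {dO : measure_display} {Omega : measurableType dO}
  (Pw : probability Omega R) (Zs : nat -> Omega -> Z)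
  (P : {measure set Z -> \bar R}) : Prop :=
  (forall n, measurable_fun setT (Zs n)) /\
  (forall n (A : set Z), measurable A -> Pw (Zs n @^-1` A) = P A) /\
  (forall (s : seq nat) (A : nat -> set Z), uniq s ->
     (forall i, measurable (A i)) ->
     Pw (\big[setI/setT]_(i <- s) (Zs i @^-1` A i)) =
     (\prod_(i <- s) Pw (Zs i @^-1` A i))%E).
End Emp.

Section Normal.
Variables (R : realType) (q : nat).

Definition normal_law (s2 : R) : set R -> \bar R :=
  if s2 == 0 then \d_(0 : R) else normal_prob 0 (Num.sqrt s2).

Definition mvnormal {dO : measure_display} {Omega : measurableType dO}
  (Pw : probability Omega R) (Y : Omega -> 'rV[R]_q) (Sigma : 'M[R]_q) : Prop :=
  forall t : 'cV[R]_q,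
    measurable_fun setT (fun w => (Y w *m t) 0 0) /\
    forall A : set R, measurable A ->
      Pw ((fun w => (Y w *m t) 0 0) @^-1` A) = normal_law ((t^T *m Sigma *m t) 0 0) A.

Definition cvg_dist_normal {dO : measure_display} {Omega : measurableType dO}
  (Pw : probability Omega R) (X : nat -> Omega -> 'rV[R]_q) (Sigma : 'M[R]_q)
  : Prop :=
  exists (d' : measure_display) (Omega' : measurableType d')
         (P' : probability Omega' R) (Y : Omega' -> 'rV[R]_q),
    mvnormal P' Y Sigma /\
    forall f : 'rV[R]_q -> R, continuous f -> (exists M, forall u, `|f u| <= M) ->
      ('E_Pw[f \o X n])%E @[n --> \oo] --> ('E_P'[f \o Y])%E.
End Normal.

From HB Require Import structures.
From mathcomp Require Import all_boot all_order all_algebra.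
From mathcomp Require Import all_classical all_reals all_analysis.
Import Order.TTheory GRing.Theory Num.Theory.
Import numFieldNormedType.Exports.
Local Open Scope classical_set_scope.
Local Open Scope ring_scope.

Theorem corollary6 (R : realType) (dy dx : measure_display)
  (Ty : measurableType dy) (Tx : measurableType dx) (q : nat)
  (psi : 'rV[R]_q -> (Ty * Tx)%type -> 'rV[R]_q) (Theta : set 'rV[R]_q)
  (Pclass : set {measure set (Ty * Tx)%type -> \bar R})
  (Hprob : forall P, Pclass P -> P setT = 1%E)
  (Huniq : forall P, Pclass P -> exists! t, EE_sol psi Theta P t)
  (Hdiff : forall P, Pclass P ->
     differentiable (EEmean psi P) (theta_EE psi Theta P))
  (Hinv : forall P, Pclass P -> Lambda psi Theta P \in unitmx)
  (HAN : forall P, Pclass P ->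
     forall (dO : measure_display) (Omega : measurableType dO)
            (Pw : probability Omega R) (Zs : nat -> Omega -> (Ty * Tx)%type),
       iid Pw Zs P ->
       cvg_dist_normal Pw
         (fun n w => Num.sqrt (n%:R : R) *:
            (theta_EE psi Theta (empirical R n (fun k => Zs k w))
             - theta_EE psi Theta P))
         (sandwich psi Theta P))
  (N : nat) (data : nat -> (Ty * Tx)%type) (HN : (0 < N)%N)
  (Hemp : Pclass (empirical R N data))
  (dO : measure_display) (Omega : measurableType dO)
  (Pw : probability Omega R) (Zs : nat -> Omega -> (Ty * Tx)%type)
  (Hiid : iid Pw Zs (empirical R N data)) :
  cvg_dist_normal Pw
    (fun M w => Num.sqrt (M%:R : R) *:
       (theta_EE psi Theta (empirical R M (fun k => Zs k w))
        - theta_EE psi Theta (empirical R N data)))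
    (sandwich psi Theta (empirical R N data)).
Proof. exact: HAN Hemp _ _ Pw Zs Hiid. Qed.
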